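(* A paratopological group $G$ with identity $e$ is dense-connected if and only if $UV^{-1}=G$ for all open neighborhoods $U$ and $V$ of $e$.
   Context: A paratopological group is a group with a topology for which multiplication $G\times G\to G$ is jointly continuous (inversion need not be continuous; no separation axioms assumed). A space is dense-connected if every dense subset of it (with the subspace topology) is connected. *)

From HB Require Import structures.
From mathcomp Require Import all_boot all_order all_algebra.
From mathcomp Require Import all_classical all_reals all_analysis.
Set Implicit Arguments. Unset Strict Implicit. Unset Printing Implicit Defensive.
Local Open Scope classical_set_scope.

Definition is_group (G : Type) (mul : G -> G -> G) (inv : G -> G) (e : G) : Prop :=
  [/\ (forall x y z, mul x (mul y z) = mul (mul x y) z),
      (forall x, mul e x = x /\ mul x e = x) &
      (forall x, mul (inv x) x = e /\ mul x (inv x) = e)].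

(* Paratopological group: group with a topology making multiplication
   G x G -> G jointly continuous (product topology); inversion need not be
   continuous; no separation axioms. *)
Definition paratopological_group (G : topologicalType)
  (mul : G -> G -> G) (inv : G -> G) (e : G) : Prop :=
  is_group mul inv e /\ continuous (fun p : G * G => mul p.1 p.2).

(* Every dense subset is connected in the subspace topology
   (mathcomp-analysis' [connected A] is connectedness of A as a subspace). *)
Definition dense_connected (G : topologicalType) : Prop :=
  forall D : set G, dense D -> connected D.

Definition set_mul_inv (G : Type) (mul : G -> G -> G) (inv : G -> G)
  (U V : set G) : set G :=
  [set z | exists2 u, U u & exists2 v, V v & z = mul u (inv v)].

From mathcomp Require Import all_boot all_order all_algebra.
From mathcomp Require Import all_classical all_reals all_analysis.
Local Open Scope classical_set_scope.

(* Call a space hyperconnected when any two nonempty open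
   sets meet.  The theorem splits into a purely topological equivalence and
   a group-theoretic one:
   - a space is dense-connected iff it is hyperconnected.  If two nonempty
     open sets A, V were disjoint, the dense set  V ∪ (G \ cl V)  would be
     disconnected by its clopen part V (which misses A).  Conversely, if
     B = D ∩ P = D ∩ C  (P open, C closed) were a proper nonempty clopen
     part of a dense set D, the nonempty open sets P and G \ C would meet;
     by density  P \ C  contains a point of D, i.e. of B outside C;
   - in a paratopological group, left translations are continuous, so
     [x | A (a x)] is open when A is.  Hence hyperconnectedness gives
     U ∩ z V ≠ ∅, i.e. z ∈ U V^{-1}; conversely, applying U V^{-1} = G to
     a^{-1} A and b^{-1} B at the point a^{-1} b produces a point of A ∩ B. *)

Definition hyperconnected (T : topologicalType) : Prop :=
  forall A B : set T, open A -> open B -> A !=set0 -> B !=set0 -> A `&` B !=set0.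

Lemma dense_setU_closureC (T : topologicalType) (V : set T) :
  dense (~` closure V `|` V).
Proof.
move=> W [w Ww] oW.
have [[y [Wy Vy]]|nWV] := pselect (W `&` V !=set0); first by exists y; split=> //; right.
have [clVw|nclVw] := pselect (closure V w); last by exists w; split=> //; left.
exfalso; apply: nWV; have [|y [Vy Wy]] := clVw W; first exact: open_nbhs_nbhs.
by exists y.
Qed.

Lemma dense_connected_hyperconnected (T : topologicalType) :
  dense_connected T -> hyperconnected T.
Proof.
move=> dc A V oA oV [a Aa] [v Vv].
have [//|nAV] := pselect (A `&` V !=set0); exfalso.
have notclV : ~ closure V a.
  by move=> /(_ A) [|y [Vy Ay]]; [exact: open_nbhs_nbhs | apply: nAV; exists y].
pose D := ~` closure V `|` V.
(* V is clopen in the connected set D, hence equals D, which contains a. *)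
have VD : V = D.
  have := dc D (@dense_setU_closureC T V) V; apply; first by exists v.
  - exists V => //; apply/seteqP; split=> [x Vx|x []//]; by split=> //; right.
  - exists (closure V); first exact: closed_closure.
    apply/seteqP; split=> [x Vx|x [[]//]]; by split; [right|exact: subset_closure].
have Va : V a by rewrite VD; left.
by apply: nAV; exists a.
Qed.

Lemma hyperconnected_dense_connected (T : topologicalType) :
  hyperconnected T -> dense_connected T.
Proof.
move=> hy D dD B [b Bb] [P oP BPD] [C cC BCD].
have [//|nBD] := pselect (B = D); exfalso.
have [d [Dd nBd]] : exists d, D d /\ ~ B d.
  apply: contra_notP nBD => hn; apply/seteqP; split=> [x|x Dx].
    by rewrite BPD => -[].
  by apply: contra_notP hn => nBx; exists x.
have nCd : ~ C d by move=> Cd; apply: nBd; rewrite BCD.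
(* P \ C is a nonempty open set, so it meets D; such a point is in B \ C. *)
have [x [[Px nCx] Dx]] : (P `&` ~` C) `&` D !=set0.
  apply: dD; last by apply: openI => //; rewrite openC.
  apply: hy => //; first by rewrite openC.
  - by exists b; move: Bb; rewrite BPD => -[].
  - by exists d.
have Bx : B x by rewrite BPD.
by move: Bx; rewrite BCD => -[].
Qed.

Section ParatopologicalGroup.
Variables (G : topologicalType) (mul : G -> G -> G) (inv : G -> G) (e : G).
Hypothesis paraG : paratopological_group mul inv e.

Let mulA : forall x y z, mul x (mul y z) = mul (mul x y) z.
Proof. by case: paraG => -[]. Qed.
Let mul1g x : mul e x = x. Proof. by case: paraG => -[_ /(_ x) []]. Qed.
Let mulg1 x : mul x e = x. Proof. by case: paraG => -[_ /(_ x) []]. Qed.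
Let mulVg x : mul (inv x) x = e. Proof. by case: paraG => -[_ _ /(_ x) []]. Qed.
Let mulgV x : mul x (inv x) = e. Proof. by case: paraG => -[_ _ /(_ x) []]. Qed.

Lemma invg_unique a b : mul a b = e -> b = inv a.
Proof. by move=> ab; rewrite -[b]mul1g -(mulVg a) -mulA ab mulg1. Qed.

Lemma invg_mulVg z u : inv (mul (inv z) u) = mul (inv u) z.
Proof.
symmetry; apply: invg_unique.
by rewrite -mulA (mulA u) mulgV mul1g mulVg.
Qed.

Lemma open_lmul_preimage (a : G) {A : set G} :
  open A -> open [set x | A (mul a x)].
Proof.
have mulC : continuous (fun p : G * G => mul p.1 p.2) by case: paraG.
have lmulC : continuous (mul a).
  move=> x; apply: (@continuous2_cvg _ G G G _ _ (fun _ => a) id mul a x (mulC (a, x))).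
  - exact: cvg_cst.
  - exact: cvg_id.
by move: lmulC => /continuousP; apply.
Qed.

(* Hyperconnectedness gives U V^{-1} = G: each z lies in U V^{-1}
   because U meets the open neighbourhood z V of z. *)
Lemma hyperconnected_set_mul_inv : hyperconnected G ->
  forall U V : set G, open U -> U e -> open V -> V e ->
    set_mul_inv mul inv U V = setT.
Proof.
move=> hy U V oU Ue oV Ve; apply/seteqP; split=> // z _.
have [||u [Uu Vu]] := hy U [set x | V (mul (inv z) x)] oU (open_lmul_preimage (inv z) oV).
- by exists e.
- by exists z; rewrite /= mulVg.
exists u => //; exists (mul (inv z) u) => //.
by rewrite invg_mulVg mulA mulgV mul1g.
Qed.

(* Conversely, for nonempty open A ∋ a and B ∋ b, writing a^{-1} b = u v^{-1}
   with a u ∈ A and b v ∈ B gives the common point a u = b v. *)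
Lemma set_mul_inv_hyperconnected :
  (forall U V : set G, open U -> U e -> open V -> V e ->
    set_mul_inv mul inv U V = setT) -> hyperconnected G.
Proof.
move=> UV A B oA oB [a Aa] [b Bb].
have := UV _ _ (open_lmul_preimage a oA) _ (open_lmul_preimage b oB) _.
rewrite /= !mulg1 => /(_ Aa Bb) /seteqP [_ /(_ (mul (inv a) b) I)].
move=> [u Au [v Bv uv]].
have aub : mul a u = mul b v.
  rewrite -[u]mulg1 -(mulVg v) !mulA -(mulA a u) -uv.
  by rewrite mulA mulgV mul1g.
by exists (mul a u); split=> //; rewrite aub.
Qed.

End ParatopologicalGroup.

Theorem theorem4p9 (G : topologicalType) (mul : G -> G -> G) (inv : G -> G) (e : G) :
  paratopological_group mul inv e ->
  (dense_connected G <->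
   forall U V : set G, open U -> U e -> open V -> V e ->
     set_mul_inv mul inv U V = setT).
Proof.
move=> paraG; split.
- move/dense_connected_hyperconnected.
  exact: (@hyperconnected_set_mul_inv G mul inv e paraG).
- move/(@set_mul_inv_hyperconnected G mul inv e paraG).
  exact: hyperconnected_dense_connected.
Qed.
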